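(* Let $M,N\in\Lambda$. If $\mathrm{BT}(M)=\mathrm{BT}(N)$ then $M\equiv N$.
   Context: Call-by-value $\lambda$-calculus with permutations: $\lambda$-terms and values are $M,N::=V\mid MN$, $V::=x\mid\lambda x.M$, up to $\alpha$-conversion. Rules: $(\beta_v)$ $(\lambda x.M)V\to M\{x:=V\}$ if $V$ is a value; $(\sigma_1)$ $(\lambda x.M)NP\to(\lambda x.MP)N$ if $x\notin\mathrm{FV}(P)$; $(\sigma_3)$ $V((\lambda x.M)N)\to(\lambda x.VM)N$ if $V$ is a value and $x\notin\mathrm{FV}(V)$. $\to_{\beta_v}$ is the contextual closure of $(\beta_v)$ alone, $\to_{\mathsf v}$ the contextual closure of all three rules, $\twoheadrightarrow$ denotes reflexive-transitive closures. Approximants: $\Lambda_\bot$ is the set of $\lambda$-terms possibly containing a constant $\bot$. $\sqsubseteq$ is the smallest context-closed preorder on $\Lambda_\bot$ with $\bot\sqsubseteq x$ and $\bot\sqsubseteq\lambda x.M$. The set $\mathcal A$ of approximants is generated by ($k\ge0$): $A::=B\mid C$; $B::=x\mid\lambda x.A\mid\bot\mid xBA_1\cdots A_k$; $C::=(\lambda x.A)(yBA_1\cdots A_k)$. For $M\in\Lambda$, $\mathcal A(M)=\{A\in\mathcal A\mid\exists N\in\Lambda,\ M\twoheadrightarrow_{\mathsf v}N,\ A\sqsubseteq N\}$, and the Böhm tree $\mathrm{BT}(M)=\bigsqcup\mathcal A(M)$; in particular $\mathrm{BT}(M)=\mathrm{BT}(N)$ iff $\mathcal A(M)=\mathcal A(N)$.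 Observational equivalence: $M\equiv N$ iff for every single-hole context $C[-]$ such that $C[M]$ and $C[N]$ are closed, $C[M]\twoheadrightarrow_{\beta_v}V$ for some value $V$ if and only if $C[N]\twoheadrightarrow_{\beta_v}U$ for some value $U$. *)

(* Call-by-value lambda-calculus with permutations (lambda_v + sigma),
   terms represented with de Bruijn indices (so alpha-conversion is built in). *)
From Stdlib Require Import Arith Relations.

Inductive term : Type :=
| Var : nat -> term
| Lam : term -> term
| App : term -> term -> term.

Definition is_value (t : term) : Prop :=
  match t with Var _ | Lam _ => True | App _ _ => False end.

Fixpoint lift (k : nat) (t : term) : term :=
  match t with
  | Var n => if Nat.ltb n k then Var n else Var (S n)
  | Lam b => Lam (lift (S k) b)
  | App a b => App (lift k a) (lift k b)
  end.

Fixpoint subst (k : nat) (u : term) (t : term) : term :=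
  match t with
  | Var n =>
      if Nat.ltb n k then Var n
      else if Nat.eqb n k then u
      else Var (pred n)
  | Lam b => Lam (subst (S k) (lift 0 u) b)
  | App a b => App (subst k u a) (subst k u b)
  end.

Definition subst0 (u t : term) : term := subst 0 u t.

Inductive beta_v_rule : term -> term -> Prop :=
| rule_beta_v : forall M V, is_value V -> beta_v_rule (App (Lam M) V) (subst0 V M).

(* (sigma_1) (\x.M) N P -> (\x.M P) N, x not free in P
   (in de Bruijn form P is lifted under the binder, which encodes x \notin FV(P)) *)
(* (sigma_3) V ((\x.M) N) -> (\x.V M) N, V value, x not free in V *)
Inductive v_rule : term -> term -> Prop :=
| vr_beta : forall M N, beta_v_rule M N -> v_rule M N
| vr_sigma1 : forall M N P,
    v_rule (App (App (Lam M) N) P) (App (Lam (App M (lift 0 P))) N)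
| vr_sigma3 : forall V M N, is_value V ->
    v_rule (App V (App (Lam M) N)) (App (Lam (App (lift 0 V) M)) N).

Inductive ctx_closure (R : term -> term -> Prop) : term -> term -> Prop :=
| cc_root : forall M N, R M N -> ctx_closure R M N
| cc_lam : forall M N, ctx_closure R M N -> ctx_closure R (Lam M) (Lam N)
| cc_appl : forall M N P, ctx_closure R M N -> ctx_closure R (App M P) (App N P)
| cc_appr : forall M N P, ctx_closure R M N -> ctx_closure R (App P M) (App P N).

Definition step_beta_v : term -> term -> Prop := ctx_closure beta_v_rule.
Definition step_v : term -> term -> Prop := ctx_closure v_rule.

Definition red_beta_v : term -> term -> Prop := clos_refl_trans term step_beta_v.
Definition red_v : term -> term -> Prop := clos_refl_trans term step_v.

Inductive bterm : Type :=
| BBot : bterm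
| BVar : nat -> bterm
| BLam : bterm -> bterm
| BApp : bterm -> bterm -> bterm.

Fixpoint embed (t : term) : bterm :=
  match t with
  | Var n => BVar n
  | Lam b => BLam (embed b)
  | App a b => BApp (embed a) (embed b)
  end.

Inductive below : bterm -> bterm -> Prop :=
| below_refl : forall A, below A A
| below_trans : forall A B C, below A B -> below B C -> below A C
| below_bot_var : forall n, below BBot (BVar n)
| below_bot_lam : forall M, below BBot (BLam M)
| below_lam : forall A B, below A B -> below (BLam A) (BLam B)
| below_appl : forall A B P, below A B -> below (BApp A P) (BApp B P)
| below_appr : forall A B P, below A B -> below (BApp P A) (BApp P B).

(* Grammar of approximants:
   A ::= B | C
   B ::= x | \x.A | bot | x B A_1 ... A_k
   C ::= (\x.A)(y B A_1 ... A_k)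
   head_app t  <->  t = x B A_1 ... A_k  (k >= 0) *)
Inductive is_A : bterm -> Prop :=
| A_B : forall t, is_B t -> is_A t
| A_C : forall a h, is_A a -> head_app h -> is_A (BApp (BLam a) h)
with is_B : bterm -> Prop :=
| B_var : forall n, is_B (BVar n)
| B_lam : forall a, is_A a -> is_B (BLam a)
| B_bot : is_B BBot
| B_head : forall h, head_app h -> is_B h
with head_app : bterm -> Prop :=
| H_base : forall x b, is_B b -> head_app (BApp (BVar x) b)
| H_step : forall h a, head_app h -> is_A a -> head_app (BApp h a).

Definition approximants (M : term) (A : bterm) : Prop :=
  is_A A /\ exists N, red_v M N /\ below A (embed N).

(* The Boehm tree BT(M) = sup A(M) is represented by the ideal of its
   approximants; BT(M) = BT(N) iff A(M) = A(N). *)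
Definition BT_eq (M N : term) : Prop :=
  forall A, approximants M A <-> approximants N A.

Inductive context : Type :=
| Hole : context
| CLam : context -> context
| CAppL : context -> term -> context
| CAppR : term -> context -> context.

(* plugging may capture variables *)
Fixpoint plug (C : context) (t : term) : term :=
  match C with
  | Hole => t
  | CLam C' => Lam (plug C' t)
  | CAppL C' u => App (plug C' t) u
  | CAppR u C' => App u (plug C' t)
  end.

Fixpoint closed_at (k : nat) (t : term) : Prop :=
  match t with
  | Var n => n < k
  | Lam b => closed_at (S k) b
  | App a b => closed_at k a /\ closed_at k b
  end.

Definition closed (t : term) : Prop := closed_at 0 t.

Definition converges (t : term) : Prop :=
  exists V, red_beta_v t V /\ is_value V.

Definition obs_equiv (M N : term) : Prop :=
  forall C : context, closed (plug C M) -> closed (plug C N) ->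
    (converges (plug C M) <-> converges (plug C N)).

(* The argument goes through a non-idempotent intersection type system for the
   call-by-value calculus.  A closed term converges iff it is typable, and a
   typing of C[M] only uses finitely many typings of M.  Typings are invariant
   under the sigma-rules and preserved by beta-expansion, while contracting a
   typed beta-redex strictly decreases the size of the derivations.  Reducing
   such redexes and sigma-redexes of M as long as possible therefore reaches a
   reduct of M carrying an approximant A such that every term above A has the
   given typings of M.  When BT(M) = BT(N), A lies below some reduct of N as
   well, so that reduct, hence N by expansion, has these typings: C[N] is
   typable and converges. *)

From Stdlib Require Import Arith Lia List Permutation Relations Setoid Morphisms.
From Stdlib Require Import Classical ClassicalEpsilon.
Import ListNotations.

(** * Multisets of arrows and environments *)

Inductive arrow : Type := Arr : list arrow -> list arrow -> arrow.

Definition arrow_eq_dec (x y : arrow) : {x = y} + {x <> y} := excluded_middle_informative (x = y).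

Ltac solve_perm :=
  apply (proj2 (Permutation_count_occ arrow_eq_dec _ _)); let x := fresh "x" in intro x;
  repeat match goal with H : Permutation _ _ |- _ =>
    pose proof (proj1 (Permutation_count_occ arrow_eq_dec _ _) H x); clear H end;
  repeat rewrite ?count_occ_app in *; simpl in *; lia.

Lemma Permutation_nil_r {A} (l : list A) : Permutation l [] -> l = [].
Proof. intro H; apply Permutation_nil, Permutation_sym, H. Qed.

Definition env := nat -> list arrow.
Definition env_eq (G D : env) : Prop := forall n, Permutation (G n) (D n).
Definition env_empty : env := fun _ => [].
Definition env_add (G D : env) : env := fun n => G n ++ D n.
Definition env_tl (G : env) : env := fun n => G (S n).
Definition env_rem (k : nat) (G : env) : env := fun n => if n <? k then G n else G (S n).
Definition env_ins (k : nat) (G : env) : env :=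
  fun n => if n <? k then G n else if n =? k then [] else G (pred n).
Definition env_single (m : nat) (P : list arrow) : env := fun n => if n =? m then P else [].

#[export] Instance env_eq_equiv : Equivalence env_eq.
Proof.
  split.
  - intros G n; apply Permutation_refl.
  - intros G D H n; symmetry; apply H.
  - intros G D E H1 H2 n; etransitivity; [apply H1|apply H2].
Qed.

#[export] Instance env_add_proper : Proper (env_eq ==> env_eq ==> env_eq) env_add.
Proof. intros G G' H D D' H' n; apply Permutation_app; auto. Qed.

#[export] Instance env_tl_proper : Proper (env_eq ==> env_eq) env_tl.
Proof. intros G G' H n; apply H. Qed.

#[export] Instance env_rem_proper k : Proper (env_eq ==> env_eq) (env_rem k).
Proof. intros G G' H n; unfold env_rem; destruct (n <? k); apply H. Qed.

#[export] Instance env_ins_proper k : Proper (env_eq ==> env_eq) (env_ins k).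
Proof.
  intros G G' H n; unfold env_ins.
  destruct (n <? k); [apply H|destruct (n =? k); [constructor|apply H]].
Qed.

Ltac solve_env :=
  let n := fresh "n" in intro n;
  unfold env_add, env_tl, env_rem, env_ins, env_single, env_empty in *;
  repeat match goal with
  | |- context [Nat.ltb ?a ?b] => destruct (Nat.ltb_spec a b)
  | |- context [Nat.eqb ?a ?b] => destruct (Nat.eqb_spec a b)
  end;
  try (exfalso; lia);
  repeat match goal with E : _ = _ |- _ => subst end;
  repeat (match goal with |- context [pred ?m] => is_var m; destruct m; cbn [pred] in * end);
  try (exfalso; lia);
  try solve_perm.

Lemma env_add_eq_empty G1 G2 :
  env_eq (env_add G1 G2) env_empty -> env_eq G1 env_empty /\ env_eq G2 env_empty.
Proof.
  intro H; split; intro n; specialize (H n); unfold env_add, env_empty in *;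
    apply Permutation_sym, Permutation_nil, app_eq_nil in H as [H1 H2];
    rewrite ?H1, ?H2; constructor.
Qed.

(** * Typing *)

(* Non-idempotent intersection types for call-by-value: a judgement
   [typed G M P s] assigns to [M] a multiset [P] (a list up to permutation)
   of arrows, [s] being the size of the derivation.  A value gets one arrow
   per use, each given by its own derivation, so sizes add up and
   beta-reduction of a typed redex strictly decreases the size.  In
   [typed_lam_cons], [Gb 0] is the multiset used by the body for the bound
   variable. *)
Inductive typed : env -> term -> list arrow -> nat -> Prop :=
| typed_var G n P : env_eq G (env_single n P) -> typed G (Var n) P 0
| typed_lam_nil G M : env_eq G env_empty -> typed G (Lam M) [] 0
| typed_lam_cons G Gb G' M P Q L s1 s2 :
    typed Gb M Q s1 -> Permutation (Gb 0) P -> typed G' (Lam M) L s2 ->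
    env_eq G (env_add (env_tl Gb) G') -> typed G (Lam M) (Arr P Q :: L) (S (s1 + s2))
| typed_app G G1 G2 M N P Q Q' s1 s2 :
    typed G1 M [Arr P Q] s1 -> typed G2 N P s2 -> env_eq G (env_add G1 G2) ->
    Permutation Q Q' -> typed G (App M N) Q' (S (s1 + s2)).

Definition typable (G : env) (M : term) (P : list arrow) : Prop := exists s, typed G M P s.

#[export] Instance typed_proper : Proper (env_eq ==> eq ==> eq ==> eq ==> iff) typed.
Proof.
  enough (H : forall G G' M P s, env_eq G G' -> typed G M P s -> typed G' M P s).
  { intros G G' HG ? M -> ? P -> ? s ->; split; apply H; [|symmetry]; exact HG. }
  intros G G' M P s HG H; destruct H.
  - apply typed_var; rewrite <- HG; auto.
  - apply typed_lam_nil; rewrite <- HG; auto.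
  - eapply typed_lam_cons; eauto; rewrite <- HG; auto.
  - eapply typed_app; eauto; rewrite <- HG; auto.
Qed.

Lemma typed_var_inv G n P s : typed G (Var n) P s -> env_eq G (env_single n P) /\ s = 0.
Proof. intro H; inversion H; subst; auto. Qed.

Lemma typed_lam_nil_inv G M s : typed G (Lam M) [] s -> env_eq G env_empty /\ s = 0.
Proof. intro H; inversion H; subst; auto. Qed.

Lemma typed_lam_cons_inv G M a L s : typed G (Lam M) (a :: L) s -> exists Gb G' P Q s1 s2,
  a = Arr P Q /\ typed Gb M Q s1 /\ Permutation (Gb 0) P /\ typed G' (Lam M) L s2 /\
  env_eq G (env_add (env_tl Gb) G') /\ s = S (s1 + s2).
Proof. intro H; inversion H; subst; repeat eexists; eauto. Qed.

Lemma typed_app_inv G M N Q' s : typed G (App M N) Q' s -> exists G1 G2 P Q s1 s2,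
  typed G1 M [Arr P Q] s1 /\ typed G2 N P s2 /\ env_eq G (env_add G1 G2) /\
  Permutation Q Q' /\ s = S (s1 + s2).
Proof. intro H; inversion H; subst; repeat eexists; eauto. Qed.

Lemma typed_lam_perm G M L s L' :
  typed G (Lam M) L s -> Permutation L L' -> typed G (Lam M) L' s.
Proof.
  intros H HL; revert G s H; induction HL; intros G s H; auto.
  - destruct (typed_lam_cons_inv _ _ _ _ _ H) as (Gb&G'&P&Q&s1&s2&->&H1&H2&H3&H4&->).
    eapply typed_lam_cons; eauto.
  - destruct (typed_lam_cons_inv _ _ _ _ _ H) as (Gb&G'&P&Q&s1&s2&->&H1&H2&H3&H4&->).
    destruct (typed_lam_cons_inv _ _ _ _ _ H3)
      as (Gb'&G''&P'&Q'&s1'&s2'&->&H1'&H2'&H3'&H4'&->).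
    replace (S (s1 + S (s1' + s2'))) with (S (s1' + S (s1 + s2'))) by lia.
    eapply typed_lam_cons; eauto.
    + eapply typed_lam_cons; eauto. reflexivity.
    + rewrite H4, H4'. solve_env.
Qed.

Lemma typed_perm G M P s P' : typed G M P s -> Permutation P P' -> typed G M P' s.
Proof.
  intros H HP; destruct H.
  - apply typed_var. rewrite H. solve_env.
  - apply Permutation_nil in HP as ->. apply typed_lam_nil; auto.
  - eapply typed_lam_perm; [eapply typed_lam_cons; eauto|auto].
  - eapply typed_app; eauto. etransitivity; eauto.
Qed.

Lemma typed_value_nil_inv G V s : is_value V -> typed G V [] s -> env_eq G env_empty /\ s = 0.
Proof.
  destruct V; simpl; intros HV H; try contradiction.
  - apply typed_var_inv in H as [H ->]; split; auto. rewrite H; solve_env.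
  - apply typed_lam_nil_inv in H; auto.
Qed.

Lemma typed_value_nil G V : is_value V -> env_eq G env_empty -> typed G V [] 0.
Proof.
  destruct V; simpl; intros HV H; try contradiction.
  - apply typed_var. rewrite H; solve_env.
  - apply typed_lam_nil; auto.
Qed.

Lemma typed_value_app_inv V P1 P2 G s : is_value V -> typed G V (P1 ++ P2) s ->
  exists G1 G2 s1 s2, env_eq G (env_add G1 G2) /\ s = s1 + s2 /\
    typed G1 V P1 s1 /\ typed G2 V P2 s2.
Proof.
  destruct V as [n|M|]; simpl; intros HV; try contradiction.
  - intros H; apply typed_var_inv in H as [H ->].
    exists (env_single n P1), (env_single n P2), 0, 0;
      repeat split; try (apply typed_var; reflexivity).
    rewrite H; solve_env.
  - revert P2 G s; induction P1 as [|a P1 IH]; intros P2 G s H.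
    + exists env_empty, G, 0, s; repeat split; auto.
      * solve_env.
      * apply typed_lam_nil; reflexivity.
    + destruct (typed_lam_cons_inv _ _ _ _ _ H) as (Gb&G'&P&Q&s1&s2&->&H1&H2&H3&H4&->).
      destruct (IH _ _ _ H3) as (G1&G2&t1&t2&E&->&Ha&Hb).
      exists (env_add (env_tl Gb) G1), G2, (S (s1 + t1)), t2; repeat split; auto.
      * rewrite H4, E; solve_env.
      * lia.
      * eapply typed_lam_cons; eauto; reflexivity.
Qed.

Lemma typed_value_app V P1 P2 G1 G2 s1 s2 : is_value V ->
  typed G1 V P1 s1 -> typed G2 V P2 s2 -> typed (env_add G1 G2) V (P1 ++ P2) (s1 + s2).
Proof.
  destruct V as [n|M|]; simpl; intros HV; try contradiction.
  - intros H1 H2. apply typed_var_inv in H1 as [H1 ->]; apply typed_var_inv in H2 as [H2 ->].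
    apply typed_var. rewrite H1, H2; solve_env.
  - revert G1 s1; induction P1 as [|a P1 IH]; intros G1 s1 H1 H2.
    + apply typed_lam_nil_inv in H1 as [H1 ->]. rewrite H1. eapply typed_proper; eauto. solve_env.
    + destruct (typed_lam_cons_inv _ _ _ _ _ H1) as (Gb&G3&P&Q&t1&t2&->&Ha&Hb&Hc&Hd&->).
      replace (S (t1 + t2) + s2) with (S (t1 + (t2 + s2))) by lia.
      eapply typed_lam_cons; [exact Ha|exact Hb|exact (IH _ _ Hc H2)|]. rewrite Hd; solve_env.
Qed.

Lemma is_value_lift V k : is_value V -> is_value (lift k V).
Proof. destruct V; simpl; auto. destruct (n <? k); simpl; auto. Qed.

Lemma typed_lift M G P s k : typed G M P s -> typed (env_ins k G) (lift k M) P s.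
Proof.
  revert G P s k; induction M as [n|M IH|M1 IH1 M2 IH2]; intros G P s k H.
  - apply typed_var_inv in H as [H ->]. simpl.
    destruct (Nat.ltb_spec n k); apply typed_var; rewrite H; solve_env.
  - simpl. revert G s H; induction P as [|a P IHP]; intros G s H.
    + apply typed_lam_nil_inv in H as [H ->]. apply typed_lam_nil. rewrite H; solve_env.
    + destruct (typed_lam_cons_inv _ _ _ _ _ H) as (Gb&G'&P0&Q&s1&s2&->&Ha&Hb&Hc&Hd&->).
      eapply typed_lam_cons; [exact (IH _ _ _ (S k) Ha)|exact Hb|exact (IHP _ _ Hc)|].
      rewrite Hd; solve_env.
  - apply typed_app_inv in H as (G1&G2&P0&Q&s1&s2&H1&H2&E&HQ&->). simpl.
    eapply typed_app; eauto. rewrite E; solve_env.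
Qed.

Lemma typed_lift_inv M G P s k :
  typed G (lift k M) P s -> G k = [] /\ typed (env_rem k G) M P s.
Proof.
  revert G P s k; induction M as [n|M IH|M1 IH1 M2 IH2]; intros G P s k H; simpl in H.
  - destruct (Nat.ltb_spec n k) as [Hn|Hn]; apply typed_var_inv in H as [H ->]; split.
    + apply Permutation_nil_r. rewrite (H k). unfold env_single.
      destruct (Nat.eqb_spec k n); [lia|constructor].
    + apply typed_var. rewrite H; solve_env.
    + apply Permutation_nil_r. rewrite (H k). unfold env_single.
      destruct (Nat.eqb_spec k (S n)); [lia|constructor].
    + apply typed_var. rewrite H; solve_env.
  - revert G s H; induction P as [|a P IHP]; intros G s H.
    + apply typed_lam_nil_inv in H as [H ->]. split.
      * apply Permutation_nil_r, H.
      * apply typed_lam_nil. rewrite H; solve_env.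
    + destruct (typed_lam_cons_inv _ _ _ _ _ H) as (Gb&G'&P0&Q&s1&s2&->&Ha&Hb&Hc&Hd&->).
      destruct (IH _ _ _ _ Ha) as [Ea Ha']. destruct (IHP _ _ Hc) as [Ec Hc'].
      split.
      * apply Permutation_nil_r. rewrite (Hd k).
        unfold env_add, env_tl. rewrite Ea, Ec. constructor.
      * eapply typed_lam_cons; eauto. rewrite Hd; solve_env.
  - apply typed_app_inv in H as (G1&G2&P0&Q&s1&s2&H1&H2&E&HQ&->).
    destruct (IH1 _ _ _ _ H1) as [E1 H1']. destruct (IH2 _ _ _ _ H2) as [E2 H2'].
    split.
    + apply Permutation_nil_r. rewrite (E k). unfold env_add. rewrite E1, E2. constructor.
    + eapply typed_app; eauto. rewrite E; solve_env.
Qed.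

Lemma typed_subst M G Q s k V D sV : typed G M Q s -> is_value V -> typed D V (G k) sV ->
  typed (env_add (env_rem k G) D) (subst k V M) Q (s + sV).
Proof.
  revert G Q s k V D sV.
  induction M as [n|M IH|M1 IH1 M2 IH2]; intros G Q s k V D sV H HV HVt.
  - apply typed_var_inv in H as [H ->]. simpl.
    assert (Hk : Permutation (G k) (if k =? n then Q else [])) by (rewrite (H k); reflexivity).
    apply (typed_perm _ _ _ _ _ HVt) in Hk.
    destruct (Nat.eqb_spec k n) as [<-|Hkn].
    + rewrite Nat.ltb_irrefl, Nat.eqb_refl, H. eapply typed_proper; eauto. solve_env.
    + apply typed_value_nil_inv in Hk as [HD ->]; auto.
      destruct (Nat.ltb_spec n k); [|destruct (Nat.eqb_spec n k); [lia|]];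
        apply typed_var; rewrite H, HD; solve_env.
  - simpl. revert G s D sV H HVt; induction Q as [|a Q IHQ]; intros G s D sV H HVt.
    + apply typed_lam_nil_inv in H as [H ->].
      assert (Hk : Permutation (G k) []) by (rewrite (H k); reflexivity).
      apply (typed_perm _ _ _ _ _ HVt), typed_value_nil_inv in Hk as [HD ->]; auto.
      apply typed_lam_nil. rewrite H, HD; solve_env.
    + destruct (typed_lam_cons_inv _ _ _ _ _ H) as (Gb&G'&P&Q0&s1&s2&->&Ha&Hb&Hc&Hd&->).
      assert (Hk : Permutation (G k) (Gb (S k) ++ G' k)) by (rewrite (Hd k); reflexivity).
      apply (typed_perm _ _ _ _ _ HVt) in Hk.
      destruct (typed_value_app_inv _ _ _ _ _ HV Hk) as (D1&D2&t1&t2&ED&->&HV1&HV2).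
      pose proof (IH _ _ _ (S k) (lift 0 V) (env_ins 0 D1) t1 Ha (is_value_lift _ _ HV)
                    (typed_lift _ _ _ _ 0 HV1)) as Ha'.
      match goal with |- typed _ _ _ ?x => replace x with (S ((s1 + t1) + (s2 + t2))) by lia end.
      eapply typed_lam_cons; [exact Ha'| |exact (IHQ _ _ _ _ Hc HV2)|].
      * unfold env_add, env_rem, env_ins; simpl. rewrite app_nil_r; auto.
      * rewrite Hd, ED; solve_env.
  - apply typed_app_inv in H as (G1&G2&P&Q0&s1&s2&H1&H2&E&HQ&->). simpl.
    assert (Hk : Permutation (G k) (G1 k ++ G2 k)) by (rewrite (E k); reflexivity).
    apply (typed_perm _ _ _ _ _ HVt) in Hk.
    destruct (typed_value_app_inv _ _ _ _ _ HV Hk) as (D1&D2&t1&t2&ED&->&HV1&HV2).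
    match goal with |- typed _ _ _ ?x => replace x with (S ((s1 + t1) + (s2 + t2))) by lia end.
    eapply typed_app;
      [exact (IH1 _ _ _ _ _ _ _ H1 HV HV1)|exact (IH2 _ _ _ _ _ _ _ H2 HV HV2)| |exact HQ].
    rewrite E, ED; solve_env.
Qed.

Lemma typed_subst_inv M k V G Q s : is_value V -> typed G (subst k V M) Q s ->
  exists G' D s1 s2, typed G' M Q s1 /\ typed D V (G' k) s2 /\ env_eq G (env_add (env_rem k G') D).
Proof.
  revert k V G Q s; induction M as [n|M IH|M1 IH1 M2 IH2]; intros k V G Q s HV H; simpl in H.
  - destruct (Nat.eqb_spec n k) as [->|Hnk].
    + rewrite Nat.ltb_irrefl in H.
      exists (env_single k Q), G, 0, s; repeat split.
      * apply typed_var; reflexivity.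
      * unfold env_single. rewrite Nat.eqb_refl. auto.
      * solve_env.
    + exists (env_single n Q), env_empty, 0, 0; repeat split.
      * apply typed_var; reflexivity.
      * unfold env_single. destruct (Nat.eqb_spec k n); [lia|].
        apply typed_value_nil; auto; reflexivity.
      * destruct (Nat.ltb_spec n k); [|destruct (Nat.eqb_spec n k); [lia|]];
          apply typed_var_inv in H as [H ->]; rewrite H; solve_env.
  - revert G s H; induction Q as [|a Q IHQ]; intros G s H.
    + apply typed_lam_nil_inv in H as [H ->].
      exists env_empty, env_empty, 0, 0; repeat split.
      * apply typed_lam_nil; reflexivity.
      * apply typed_value_nil; auto; reflexivity.
      * rewrite H; solve_env.
    + destruct (typed_lam_cons_inv _ _ _ _ _ H) as (Gb&G2&P&Q0&s1&s2&->&Ha&Hb&Hc&Hd&->).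
      destruct (IH _ _ _ _ _ (is_value_lift V 0 HV) Ha) as (Gb'&Db&t1&t2&Ha'&HV1&Eb).
      apply typed_lift_inv in HV1 as [Db0 HV1].
      destruct (IHQ _ _ Hc) as (G2'&D2&t3&t4&Hc'&HV2&E2).
      exists (env_add (env_tl Gb') G2'), (env_add (env_rem 0 Db) D2), (S (t1 + t3)), (t2 + t4).
      repeat split.
      * eapply typed_lam_cons; [exact Ha'| |exact Hc'|reflexivity].
        rewrite <- Hb, (Eb 0). unfold env_add, env_rem; simpl. rewrite Db0, app_nil_r. reflexivity.
      * apply typed_value_app; auto.
      * rewrite Hd, Eb, E2. intro n. unfold env_add, env_tl, env_rem. simpl.
        destruct (Nat.ltb_spec (S n) (S k)); destruct (Nat.ltb_spec n k); try lia; solve_perm.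
  - apply typed_app_inv in H as (G1&G2&P&Q0&s1&s2&H1&H2&E&HQ&->).
    destruct (IH1 _ _ _ _ _ HV H1) as (G1'&D1&t1&t2&H1'&HV1&E1).
    destruct (IH2 _ _ _ _ _ HV H2) as (G2'&D2&t3&t4&H2'&HV2&E2).
    exists (env_add G1' G2'), (env_add D1 D2), (S (t1 + t3)), (t2 + t4); repeat split.
    + eapply typed_app; eauto; reflexivity.
    + apply typed_value_app; auto.
    + rewrite E, E1, E2. solve_env.
Qed.

(** * Reduction and expansion *)

Lemma typed_beta_redex M V G Q s : is_value V -> typed G (App (Lam M) V) Q s ->
  exists s', typed G (subst0 V M) Q s' /\ s' < s.
Proof.
  intros HV H. apply typed_app_inv in H as (G1&G2&P&Q0&s1&s2&H1&H2&E&HQ&->).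
  destruct (typed_lam_cons_inv _ _ _ _ _ H1) as (Gb&G'&P'&Q'&sb&s'&Heq&Hb&HP&H'&E1&->).
  injection Heq as <- <-. apply typed_lam_nil_inv in H' as [H' ->].
  apply Permutation_sym in HP.
  pose proof (typed_subst _ _ _ _ 0 _ _ _ Hb HV (typed_perm _ _ _ _ _ H2 HP)) as H3.
  exists (sb + s2); split; [|lia].
  eapply typed_perm; [|exact HQ]. rewrite E, E1, H'. eapply typed_proper; eauto. solve_env.
Qed.

Lemma typed_beta_contractum M V G Q s : is_value V -> typed G (subst0 V M) Q s ->
  typable G (App (Lam M) V) Q.
Proof.
  intros HV H. destruct (typed_subst_inv _ _ _ _ _ _ HV H) as (G'&D&s1&s2&H1&H2&E).
  eexists. eapply typed_app; [|exact H2| |reflexivity].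
  - eapply typed_lam_cons; [exact H1|reflexivity|apply typed_lam_nil; reflexivity|reflexivity].
  - rewrite E. solve_env.
Qed.

Inductive sigma_rule : term -> term -> Prop :=
| sigma_rule1 M N P :
    sigma_rule (App (App (Lam M) N) P) (App (Lam (App M (lift 0 P))) N)
| sigma_rule3 V M N : is_value V ->
    sigma_rule (App V (App (Lam M) N)) (App (Lam (App (lift 0 V) M)) N).

Definition step_sigma : term -> term -> Prop := ctx_closure sigma_rule.

Definition typing_invariant (R : term -> term -> Prop) : Prop :=
  forall M N, R M N -> forall G Q s, typed G M Q s <-> typed G N Q s.

Definition typing_expansive (R : term -> term -> Prop) : Prop :=
  forall M N, R M N -> forall G Q, typable G N Q -> typable G M Q.

Lemma typing_invariant_sigma_rule : typing_invariant sigma_rule.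
Proof.
  intros ? ? [M N P|V M N HV] G Q s; split; intro H.
  - apply typed_app_inv in H as (G1&G2&R&Q1&s1&s2&H1&H2&E&HQ&->).
    apply typed_app_inv in H1 as (G11&G12&S0&X&s11&s12&H11&H12&E1&HX&->).
    apply Permutation_sym, Permutation_length_1_inv in HX; subst X.
    destruct (typed_lam_cons_inv _ _ _ _ _ H11) as (Gb&Gr&P'&Q'&sb&sr&Heq&Hb&HP&Hr&E2&->).
    injection Heq as <- <-. apply typed_lam_nil_inv in Hr as [Hr ->].
    replace (S (S (S (sb + 0) + s12) + s2)) with (S (S (S (sb + s2) + 0) + s12)) by lia.
    eapply typed_app; [|exact H12| |reflexivity].
    + apply typed_lam_cons with (Gb := env_add Gb (env_ins 0 G2)) (G' := env_empty).
      * eapply typed_app; [exact Hb|exact (typed_lift _ _ _ _ 0 H2)|reflexivity|exact HQ].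
      * rewrite <- HP. unfold env_add, env_ins; simpl. rewrite app_nil_r; reflexivity.
      * apply typed_lam_nil; reflexivity.
      * reflexivity.
    + rewrite E, E1, E2, Hr. solve_env.
  - apply typed_app_inv in H as (G1&G2&S0&Q1&s1&s2&H1&H2&E&HQ&->).
    destruct (typed_lam_cons_inv _ _ _ _ _ H1) as (Gb&Gr&P'&Q'&sb&sr&Heq&Hb&HP&Hr&E2&->).
    injection Heq as <- <-. apply typed_lam_nil_inv in Hr as [Hr ->].
    apply typed_app_inv in Hb as (Gm&Gp&R&Q2&sm&sp&Hm&Hp&Eb&HQ2&->).
    apply typed_lift_inv in Hp as [Gp0 Hp].
    replace (S (S (S (sm + sp) + 0) + s2)) with (S (S (S (sm + 0) + s2) + sp)) by lia.
    eapply typed_app; [|exact Hp| |exact (Permutation_trans HQ2 HQ)].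
    + eapply typed_app; [|exact H2|reflexivity|reflexivity].
      apply typed_lam_cons with (Gb := Gm) (G' := env_empty);
        [exact Hm| |apply typed_lam_nil; reflexivity|reflexivity].
      rewrite <- HP, (Eb 0). unfold env_add. rewrite Gp0, app_nil_r. reflexivity.
    + rewrite E, E2, Hr, Eb. solve_env.
  - apply typed_app_inv in H as (G1&G2&R&Q1&s1&s2&H1&H2&E&HQ&->).
    apply typed_app_inv in H2 as (G21&G22&S0&X&s21&s22&H21&H22&E1&HX&->).
    destruct (typed_lam_cons_inv _ _ _ _ _ H21) as (Gb&Gr&P'&Q'&sb&sr&Heq&Hb&HP&Hr&E2&->).
    injection Heq as <- <-. apply typed_lam_nil_inv in Hr as [Hr ->].
    replace (S (s1 + S (S (sb + 0) + s22))) with (S (S (S (s1 + sb) + 0) + s22)) by lia.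
    eapply typed_app; [|exact H22| |reflexivity].
    + apply typed_lam_cons with (Gb := env_add (env_ins 0 G1) Gb) (G' := env_empty).
      * eapply typed_app; [exact (typed_lift _ _ _ _ 0 H1)|exact (typed_perm _ _ _ _ _ Hb HX)
                          |reflexivity|exact HQ].
      * rewrite <- HP. reflexivity.
      * apply typed_lam_nil; reflexivity.
      * reflexivity.
    + rewrite E, E1, E2, Hr. solve_env.
  - apply typed_app_inv in H as (G1&G2&S0&Q1&s1&s2&H1&H2&E&HQ&->).
    destruct (typed_lam_cons_inv _ _ _ _ _ H1) as (Gb&Gr&P'&Q'&sb&sr&Heq&Hb&HP&Hr&E2&->).
    injection Heq as <- <-. apply typed_lam_nil_inv in Hr as [Hr ->].
    apply typed_app_inv in Hb as (Gv&Gm&R&Q2&sv&sm&HVt&Hm&Eb&HQ2&->).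
    apply typed_lift_inv in HVt as [Gv0 HVt].
    replace (S (S (S (sv + sm) + 0) + s2)) with (S (sv + S (S (sm + 0) + s2))) by lia.
    eapply typed_app; [exact HVt| | |exact (Permutation_trans HQ2 HQ)].
    + eapply typed_app; [|exact H2|reflexivity|reflexivity].
      apply typed_lam_cons with (Gb := Gm) (G' := env_empty);
        [exact Hm| |apply typed_lam_nil; reflexivity|reflexivity].
      rewrite <- HP, (Eb 0). unfold env_add. rewrite Gv0. reflexivity.
    + rewrite E, E2, Hr, Eb. solve_env.
Qed.

Lemma typing_expansive_beta_v_rule : typing_expansive beta_v_rule.
Proof. intros ? ? [M V HV] G Q [s H]; eapply typed_beta_contractum; eauto. Qed.

Lemma typing_expansive_v_rule : typing_expansive v_rule.
Proof.
  intros ? ? [M N HMN|M N P|V M N HV] G Q HQ; [|destruct HQ as [s H]..].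
  - eapply typing_expansive_beta_v_rule; eauto.
  - exists s. apply (typing_invariant_sigma_rule _ _ (sigma_rule1 M N P)), H.
  - exists s. apply (typing_invariant_sigma_rule _ _ (sigma_rule3 V M N HV)), H.
Qed.

Lemma typed_lam_congr M N : (forall G Q s, typed G M Q s -> typed G N Q s) ->
  forall G L s, typed G (Lam M) L s -> typed G (Lam N) L s.
Proof.
  intros HMN G L; revert G; induction L as [|a L IH]; intros G s H.
  - apply typed_lam_nil_inv in H as [H ->]; apply typed_lam_nil; auto.
  - destruct (typed_lam_cons_inv _ _ _ _ _ H) as (Gb&G'&P&Q&s1&s2&->&Ha&Hb&Hc&Hd&->).
    eapply typed_lam_cons; eauto.
Qed.

Lemma typable_lam_congr M N : (forall G Q, typable G M Q -> typable G N Q) ->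
  forall G L, typable G (Lam M) L -> typable G (Lam N) L.
Proof.
  intros HMN G L; revert G; induction L as [|a L IH]; intros G [s H].
  - apply typed_lam_nil_inv in H as [H ->]; exists 0; apply typed_lam_nil; auto.
  - destruct (typed_lam_cons_inv _ _ _ _ _ H) as (Gb&G'&P&Q&s1&s2&->&Ha&Hb&Hc&Hd&->).
    destruct (HMN _ _ (ex_intro _ _ Ha)) as [t1 Ha'].
    destruct (IH _ (ex_intro _ _ Hc)) as [t2 Hc'].
    eexists; eapply typed_lam_cons; eauto.
Qed.

Lemma typing_invariant_ctx_closure R : typing_invariant R -> typing_invariant (ctx_closure R).
Proof.
  intros HR M N H; induction H as [M N H|M N H IH|M N P H IH|M N P H IH]; intros G Q s.
  - apply HR; auto.
  - split; apply typed_lam_congr; intros; apply IH; auto.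
  - split; intro H1; apply typed_app_inv in H1 as (G1&G2&P0&Q0&s1&s2&H1&H2&E&HQ&->);
      eapply typed_app; eauto; apply IH; auto.
  - split; intro H1; apply typed_app_inv in H1 as (G1&G2&P0&Q0&s1&s2&H1&H2&E&HQ&->);
      eapply typed_app; eauto; apply IH; auto.
Qed.

Lemma typing_expansive_ctx_closure R : typing_expansive R -> typing_expansive (ctx_closure R).
Proof.
  intros HR M N H; induction H as [M N H|M N H IH|M N P H IH|M N P H IH]; intros G Q HN.
  - eapply HR; eauto.
  - eapply typable_lam_congr; eauto.
  - destruct HN as [s HN]. apply typed_app_inv in HN as (G1&G2&P0&Q0&s1&s2&H1&H2&E&HQ&->).
    destruct (IH _ _ (ex_intro _ _ H1)) as [t1 H1']. eexists; eapply typed_app; eauto.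
  - destruct HN as [s HN]. apply typed_app_inv in HN as (G1&G2&P0&Q0&s1&s2&H1&H2&E&HQ&->).
    destruct (IH _ _ (ex_intro _ _ H2)) as [t2 H2']. eexists; eapply typed_app; eauto.
Qed.

Lemma typing_expansive_clos_refl_trans R :
  typing_expansive R -> typing_expansive (clos_refl_trans term R).
Proof. intros HR M N H; induction H; eauto. Qed.

Lemma typing_expansive_red_v : typing_expansive red_v.
Proof.
  apply typing_expansive_clos_refl_trans, typing_expansive_ctx_closure, typing_expansive_v_rule.
Qed.

Lemma ctx_closure_mono (R R' : term -> term -> Prop) : (forall M N, R M N -> R' M N) ->
  forall M N, ctx_closure R M N -> ctx_closure R' M N.
Proof.
  intros HR M N H; induction H; [apply cc_root|apply cc_lam|apply cc_appl|apply cc_appr]; auto.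
Qed.

Lemma step_beta_v_step_v M N : step_beta_v M N -> step_v M N.
Proof. apply ctx_closure_mono, vr_beta. Qed.

Lemma step_sigma_step_v M N : step_sigma M N -> step_v M N.
Proof. apply ctx_closure_mono. intros ? ? []; [apply vr_sigma1|apply vr_sigma3; auto]. Qed.

(* A polynomial interpretation for which both sigma-rules decrease: squaring
   the argument makes moving [P] (resp. [V]) under a binder pay off. *)
Fixpoint sigma_measure (t : term) : nat :=
  match t with
  | Var _ => 2
  | Lam b => S (sigma_measure b)
  | App a b => sigma_measure a * (sigma_measure b * sigma_measure b)
  end.

Lemma sigma_measure_ge2 t : 2 <= sigma_measure t.
Proof. induction t; simpl; nia. Qed.

Lemma sigma_measure_lift t k : sigma_measure (lift k t) = sigma_measure t.
Proof. revert k; induction t; intro k; simpl; auto. destruct (n <? k); auto. Qed.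

Lemma sigma_measure_sigma_rule M N : sigma_rule M N -> sigma_measure N < sigma_measure M.
Proof.
  assert (Hsq : forall t, 4 <= sigma_measure t * sigma_measure t)
    by (intro t; pose proof (sigma_measure_ge2 t); nia).
  intros [M0 N0 P|V M0 N0 HV]; simpl; rewrite sigma_measure_lift.
  - pose proof (Hsq N0); pose proof (Hsq P).
    generalize dependent (sigma_measure P * sigma_measure P).
    generalize dependent (sigma_measure N0 * sigma_measure N0). nia.
  - pose proof (Hsq N0); pose proof (sigma_measure_ge2 V).
    generalize dependent (sigma_measure N0 * sigma_measure N0). nia.
Qed.

Lemma sigma_measure_step_sigma M N : step_sigma M N -> sigma_measure N < sigma_measure M.
Proof.
  intro H; induction H as [M N H|M N H IH|M N P H IH|M N P H IH]; simpl.
  - apply sigma_measure_sigma_rule, H.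
  - lia.
  - pose proof (sigma_measure_ge2 P); nia.
  - apply Nat.mul_lt_mono_pos_l; [pose proof (sigma_measure_ge2 P); lia|].
    apply Nat.mul_lt_mono; auto.
Qed.

(** * Convergence *)

Lemma typed_closed_progress t G P s : env_eq G env_empty -> typed G t P s ->
  is_value t \/ exists t' s', step_beta_v t t' /\ typed G t' P s' /\ s' < s.
Proof.
  revert G P s; induction t as [n|b IH|a IHa c IHc]; intros G P s HG H;
    [left; exact I|left; exact I|right].
  pose proof H as H0.
  apply typed_app_inv in H as (G1&G2&P0&Q0&s1&s2&H1&H2&E&HQ&->).
  rewrite HG in E. symmetry in E. apply env_add_eq_empty in E as [E1 E2].
  destruct (IHa _ _ _ E1 H1) as [Va|(a'&t1&Ha&Ha'&Hlt)].
  - destruct a as [x|b|]; simpl in Va; try contradiction.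
    + apply typed_var_inv in H1 as [H1 _].
      pose proof (Permutation_trans (Permutation_sym (E1 x)) (H1 x)) as H3.
      unfold env_single, env_empty in H3. rewrite Nat.eqb_refl in H3.
      apply Permutation_nil in H3. discriminate.
    + destruct (IHc _ _ _ E2 H2) as [Vc|(c'&t2&Hc&Hc'&Hlt)].
      * destruct (typed_beta_redex _ _ _ _ _ Vc H0) as (s'&H3&Hlt).
        exists (subst0 c b), s'; repeat split; auto. apply cc_root. constructor; auto.
      * exists (App (Lam b) c'), (S (s1 + t2)); repeat split; [apply cc_appr; auto| |lia].
        eapply typed_app; eauto; rewrite HG, E1, E2; solve_env.
  - exists (App a' c), (S (t1 + s2)); repeat split; [apply cc_appl; auto| |lia].
    eapply typed_app; eauto; rewrite HG, E1, E2; solve_env.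
Qed.

Lemma typable_closed_converges t P : typable env_empty t P -> converges t.
Proof.
  intros [s H]; revert t H; induction s as [s IH] using lt_wf_ind; intros t H.
  destruct (typed_closed_progress _ _ _ _ (reflexivity _) H) as [V|(t'&s'&Hs&Ht'&Hlt)].
  - exists t; split; [apply rt_refl|auto].
  - destruct (IH _ Hlt _ Ht') as (V&HV&Vv). exists V; split; auto.
    eapply rt_trans; [apply rt_step; exact Hs|exact HV].
Qed.

Lemma converges_typable t : converges t -> typable env_empty t [].
Proof.
  intros (V&HV&Vv). eapply typing_expansive_clos_refl_trans; [|exact HV|].
  - apply typing_expansive_ctx_closure, typing_expansive_beta_v_rule.
  - exists 0. apply typed_value_nil; auto; reflexivity.
Qed.

(** * Families of typings *)

Definition judgement : Type := (env * list arrow)%type.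

Definition typed_family (M : term) (J : list judgement) (ss : list nat) : Prop :=
  Forall2 (fun j s => typed (fst j) M (snd j) s) J ss.

Definition typable_family (M : term) (J : list judgement) : Prop :=
  Forall (fun j => typable (fst j) M (snd j)) J.

Lemma typable_family_typed_family M J : typable_family M J <-> exists ss, typed_family M J ss.
Proof.
  split.
  - induction 1 as [|j J [s Hj] _ [ss HJ]]; [exists []|exists (s :: ss)]; constructor; auto.
  - intros [ss H]; induction H; constructor; eauto; eexists; eauto.
Qed.

Lemma typable_plug_inv C M G Q : typable G (plug C M) Q ->
  exists J, typable_family M J /\ forall M', typable_family M' J -> typable G (plug C M') Q.
Proof.
  revert G Q; induction C as [|C IH|C IH u|u C IH]; intros G Q HC; simpl in *.
  - exists [(G, Q)]; split; [constructor; auto|].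
    intros M' HM'. inversion HM'; auto.
  - revert G HC; induction Q as [|a Q IHQ]; intros G [s H].
    + apply typed_lam_nil_inv in H as [H ->].
      exists []; split; [constructor|]. intros. exists 0; apply typed_lam_nil; auto.
    + destruct (typed_lam_cons_inv _ _ _ _ _ H) as (Gb&G'&P&Q0&s1&s2&->&Ha&Hb&Hc&Hd&->).
      destruct (IH _ _ (ex_intro _ _ Ha)) as (J1&HJ1&R1).
      destruct (IHQ _ (ex_intro _ _ Hc)) as (J2&HJ2&R2).
      exists (J1 ++ J2); split; [apply Forall_app; auto|].
      intros M' HM'. apply Forall_app in HM' as [HM1 HM2].
      destruct (R1 _ HM1) as [t1 T1]. destruct (R2 _ HM2) as [t2 T2].
      eexists; eapply typed_lam_cons; eauto.
  - destruct HC as [s H]. apply typed_app_inv in H as (G1&G2&P&Q0&s1&s2&H1&H2&E&HQ&->).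
    destruct (IH _ _ (ex_intro _ _ H1)) as (J&HJ&R). exists J; split; auto.
    intros M' HM'. destruct (R _ HM') as [t T]. eexists; eapply typed_app; eauto.
  - destruct HC as [s H]. apply typed_app_inv in H as (G1&G2&P&Q0&s1&s2&H1&H2&E&HQ&->).
    destruct (IH _ _ (ex_intro _ _ H2)) as (J&HJ&R). exists J; split; auto.
    intros M' HM'. destruct (R _ HM') as [t T]. eexists; eapply typed_app; eauto.
Qed.

Lemma typed_lam_family G b L s : typed G (Lam b) L s -> exists Jb sb,
  typed_family b Jb sb /\ (Jb = [] -> L = [] /\ env_eq G env_empty) /\
  s = length Jb + list_sum sb /\
  forall b' sb', typed_family b' Jb sb' -> typed G (Lam b') L (length Jb + list_sum sb').
Proof.
  revert G s; induction L as [|a L IH]; intros G s H.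
  - apply typed_lam_nil_inv in H as [H ->].
    exists [], []; repeat split; auto; [constructor|].
    intros b' sb' Hb'. inversion Hb'; subst. apply typed_lam_nil; auto.
  - destruct (typed_lam_cons_inv _ _ _ _ _ H) as (Gb&G'&P&Q&s1&s2&->&Ha&Hb&Hc&Hd&->).
    destruct (IH _ _ Hc) as (Jr&sr&HJr&_&Hs2&R).
    exists ((Gb, Q) :: Jr), (s1 :: sr); repeat split; try discriminate.
    + constructor; auto.
    + simpl; lia.
    + intros b' sb' Hb'. inversion Hb' as [|j s1' J sr' H1 H2]; subst.
      simpl. replace (S (length Jr + (s1' + list_sum sr')))
        with (S (s1' + (length Jr + list_sum sr'))) by lia.
      eapply typed_lam_cons; eauto.
Qed.

Lemma typed_family_lam b J ss : typed_family (Lam b) J ss -> exists Jb sb,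
  typed_family b Jb sb /\
  (Jb = [] -> Forall (fun j => snd j = [] /\ env_eq (fst j) env_empty) J) /\
  list_sum ss = length Jb + list_sum sb /\
  forall b' sb', typed_family b' Jb sb' ->
    exists ss', typed_family (Lam b') J ss' /\ list_sum ss' = length Jb + list_sum sb'.
Proof.
  induction 1 as [|[G L] s J ss H1 H2 IH].
  - exists [], []; repeat split; auto; [constructor|].
    intros b' sb' Hb'. inversion Hb'; subst. exists []; split; [constructor|reflexivity].
  - destruct (typed_lam_family _ _ _ _ H1) as (Jb1&sb1&T1&N1&S1&R1).
    destruct IH as (Jb2&sb2&T2&N2&S2&R2).
    exists (Jb1 ++ Jb2), (sb1 ++ sb2); repeat split.
    + apply Forall2_app; auto.
    + intro E. apply app_eq_nil in E as [E1 E2]. constructor; auto.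
    + simpl in *. rewrite length_app, list_sum_app. lia.
    + intros b' sb' Hb'. apply Forall2_app_inv_l in Hb' as (sb1'&sb2'&Hb1&Hb2&->).
      destruct (R2 _ _ Hb2) as (ss'&T&Hs).
      exists ((length Jb1 + list_sum sb1') :: ss'); split.
      * constructor; [apply R1|]; auto.
      * simpl. rewrite length_app, list_sum_app. lia.
Qed.

Lemma typed_family_app a c J ss : typed_family (App a c) J ss -> exists Ja sa Jc sc,
  typed_family a Ja sa /\ typed_family c Jc sc /\
  length Ja = length J /\ length Jc = length J /\
  Forall (fun j => exists P Q, snd j = [Arr P Q]) Ja /\
  list_sum ss = length J + list_sum sa + list_sum sc /\
  forall a' c' sa' sc', typed_family a' Ja sa' -> typed_family c' Jc sc' ->
    exists ss', typed_family (App a' c') J ss' /\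
      list_sum ss' = length J + list_sum sa' + list_sum sc'.
Proof.
  induction 1 as [|[G L] s J ss H1 H2 IH].
  - exists [], [], [], []; repeat split; auto; try constructor.
    intros a' c' sa' sc' Ha' Hc'. inversion Ha'; inversion Hc'; subst.
    exists []; split; [constructor|reflexivity].
  - simpl in H1. apply typed_app_inv in H1 as (G1&G2&P&Q&s1&s2&H1&H3&E&HQ&->).
    destruct IH as (Ja&sa&Jc&sc&Ta&Tc&La&Lc&Fa&St&R).
    exists ((G1, [Arr P Q]) :: Ja), (s1 :: sa), ((G2, P) :: Jc), (s2 :: sc).
    repeat split; try (constructor; auto); try (simpl; lia).
    + exists P, Q; reflexivity.
    + intros a' c' sa' sc' Ha' Hc'.
      inversion Ha' as [|ja t1 Ja' sa'' T1a T1b]; inversion Hc' as [|jc t2 Jc' sc'' T2a T2b]; subst.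
      destruct (R _ _ _ _ T1b T2b) as (ss'&T&Hs).
      exists (S (t1 + t2) :: ss'); split.
      * constructor; auto. eapply typed_app; eauto; reflexivity.
      * simpl. lia.
Qed.

(** * Approximants *)

Inductive below_struct : bterm -> bterm -> Prop :=
| below_struct_bot_bot : below_struct BBot BBot
| below_struct_bot_var n : below_struct BBot (BVar n)
| below_struct_bot_lam A : below_struct BBot (BLam A)
| below_struct_var n : below_struct (BVar n) (BVar n)
| below_struct_lam A B : below_struct A B -> below_struct (BLam A) (BLam B)
| below_struct_app A1 A2 B1 B2 :
    below_struct A1 B1 -> below_struct A2 B2 -> below_struct (BApp A1 A2) (BApp B1 B2).

Lemma below_struct_refl A : below_struct A A.
Proof. induction A; constructor; auto. Qed.

Lemma below_struct_trans A B C : below_struct A B -> below_struct B C -> below_struct A C.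
Proof. intro H; revert C; induction H; intros C H'; inversion H'; subst; constructor; auto. Qed.

Lemma below_below_struct A B : below A B <-> below_struct A B.
Proof.
  split; intro H; induction H.
  - apply below_struct_refl.
  - eapply below_struct_trans; eauto.
  - constructor.
  - constructor.
  - constructor; auto.
  - constructor; auto using below_struct_refl.
  - constructor; auto using below_struct_refl.
  - apply below_refl.
  - apply below_bot_var.
  - apply below_bot_lam.
  - apply below_refl.
  - apply below_lam; auto.
  - eapply below_trans; [apply below_appl|apply below_appr]; eauto.
Qed.

Lemma below_struct_bot_inv N : below_struct BBot (embed N) -> is_value N.
Proof. destruct N; simpl; intro H; inversion H; auto. Qed.

Lemma below_struct_var_inv n N : below_struct (BVar n) (embed N) -> N = Var n.
Proof. destruct N; simpl; intro H; inversion H; auto. Qed.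

Lemma below_struct_lam_inv A N : below_struct (BLam A) (embed N) ->
  exists b, N = Lam b /\ below_struct A (embed b).
Proof. destruct N; simpl; intro H; inversion H; subst; eauto. Qed.

Lemma below_struct_app_inv A1 A2 N : below_struct (BApp A1 A2) (embed N) ->
  exists a c, N = App a c /\ below_struct A1 (embed a) /\ below_struct A2 (embed c).
Proof. destruct N; simpl; intro H; inversion H; subst; eauto. Qed.

Lemma is_A_lam_inv A : is_A (BLam A) -> is_A A.
Proof.
  intro H; inversion H as [t HB|]; subst.
  inversion HB as [| | |h Hh]; subst; auto. inversion Hh.
Qed.

Lemma is_A_head_app A1 A2 : is_A (BApp A1 A2) -> (forall A, A1 <> BLam A) -> head_app (BApp A1 A2).
Proof.
  intros H HA1. inversion H as [t HB|]; subst.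
  - inversion HB; subst; auto.
  - exfalso; eapply HA1; eauto.
Qed.

Definition sigma_normal (M : term) : Prop := forall M', ~ step_sigma M M'.

Lemma is_A_app a c Aa Ac :
  is_A Aa -> is_A Ac -> below_struct Aa (embed a) -> below_struct Ac (embed c) -> Aa <> BBot ->
  sigma_normal (App a c) -> (forall b, a = Lam b -> ~ is_value c) -> is_A (BApp Aa Ac).
Proof.
  intros IAa IAc Ha Hc Hbot Hnf Hredex.
  assert (Hlam : forall b Ab, below_struct (BLam Ab) (embed b) -> exists b', b = Lam b')
    by (intros b Ab H; apply below_struct_lam_inv in H as (b'&->&_); eauto).
  destruct a as [x|b|a1 a2]; simpl in Ha; inversion Ha; subst; try congruence.
  - apply A_B, B_head, H_base. inversion IAc as [t HB|A h _ _]; subst; auto.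
    apply below_struct_app_inv in Hc as (c1&c2&->&Hc1&_).
    destruct (Hlam _ _ Hc1) as [b1 ->].
    exfalso; eapply Hnf, cc_root, sigma_rule3; exact I.
  - apply A_C; [apply is_A_lam_inv; auto|].
    destruct c as [y|c0|c1 c2]; try (exfalso; eapply Hredex; [reflexivity|exact I]).
    simpl in Hc; inversion Hc as [| | | | |X ? Y ? HX]; subst.
    apply is_A_head_app; auto. intros z ->.
    destruct (Hlam _ _ HX) as [b1 ->].
    eapply Hnf, cc_root, sigma_rule3; exact I.
  - apply A_B, B_head, H_step; auto. apply is_A_head_app; auto. intros z ->.
    match goal with
    | H : below_struct (BLam z) (embed a1) |- _ => destruct (Hlam _ _ H) as [b1 ->]
    end.
    eapply Hnf, cc_root, sigma_rule1.
Qed.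

Definition typing_reducible (M : term) (J : list judgement) (ss : list nat) : Prop :=
  exists M' ss', step_beta_v M M' /\ typed_family M' J ss' /\ list_sum ss' < list_sum ss.

Lemma typing_reducible_beta_redex b c J ss : J <> [] -> is_value c ->
  typed_family (App (Lam b) c) J ss -> typing_reducible (App (Lam b) c) J ss.
Proof.
  intros HJ Hc H.
  assert (Hred : exists ss',
            typed_family (subst0 c b) J ss' /\ list_sum ss' + length J <= list_sum ss).
  { clear HJ; induction H as [|j s J ss Hj _ (ss'&T&Le)].
    { exists []; split; [constructor|reflexivity]. }
    destruct (typed_beta_redex _ _ _ _ _ Hc Hj) as (s'&Hs'&Hlt).
    exists (s' :: ss'); split; [constructor; auto|simpl; lia]. }
  destruct Hred as (ss'&T&Le).
  exists (subst0 c b), ss'; repeat split; auto.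
  - apply cc_root; constructor; auto.
  - destruct J; [congruence|simpl in Le; lia].
Qed.

(* The clause on [BBot] lets the application case rule out a [BBot] in
   function position: there every judgement has an arrow type. *)
Lemma readout_approximant N J ss : J <> [] -> typed_family N J ss ->
  ~ typing_reducible N J ss -> sigma_normal N ->
  exists A, is_A A /\ below_struct A (embed N) /\
    (A = BBot -> Forall (fun j => snd j = []) J) /\
    forall N', below_struct A (embed N') -> typable_family N' J.
Proof.
  revert J ss; induction N as [n|b IH|a IHa c IHc]; intros J ss HJ T Hirr Hnf.
  - exists (BVar n); repeat split; try discriminate; [apply A_B, B_var|constructor|].
    intros N' H. apply below_struct_var_inv in H as ->. apply typable_family_typed_family; eauto.
  - destruct (typed_family_lam _ _ _ T) as (Jb&sb&Tb&Hnil&Hsum&R).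
    destruct Jb as [|jb Jb'] eqn:EJb.
    + specialize (Hnil eq_refl). exists BBot; repeat split; [apply A_B, B_bot|constructor| |].
      * intros _. eapply Forall_impl; [|exact Hnil]. intros j []; auto.
      * intros N' H. apply below_struct_bot_inv in H.
        eapply Forall_impl; [|exact Hnil]. intros [G L] [-> HG]. exists 0.
        apply typed_value_nil; auto.
    + rewrite <- EJb in *.
      assert (Hirrb : ~ typing_reducible b Jb sb).
      { intros (b'&sb'&Hs&T'&Lt). apply Hirr. destruct (R _ _ T') as (ss'&T''&Hs').
        exists (Lam b'), ss'; repeat split; auto; [apply cc_lam; auto|lia]. }
      destruct (IH Jb sb ltac:(subst; discriminate) Tb Hirrb (fun b' Hs => Hnf _ (cc_lam _ _ _ Hs)))
        as (Ab&IAb&HAb&_&RAb).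
      exists (BLam Ab); repeat split; try discriminate; [apply A_B, B_lam; auto|constructor; auto|].
      intros N' H. apply below_struct_lam_inv in H as (b'&->&H).
      destruct (proj1 (typable_family_typed_family _ _) (RAb _ H)) as [sb' Tb'].
      destruct (R _ _ Tb') as (ss'&T'&_). apply typable_family_typed_family; eauto.
  - destruct (typed_family_app _ _ _ _ T) as (Ja&sa&Jc&sc&Ta&Tc&La&Lc&Fa&Hsum&R).
    assert (HJa : Ja <> []) by (intros ->; destruct J; [congruence|discriminate]).
    assert (HJc : Jc <> []) by (intros ->; destruct J; [congruence|discriminate]).
    assert (Hirra : ~ typing_reducible a Ja sa).
    { intros (a'&sa'&Hs&T'&Lt). apply Hirr. destruct (R _ _ _ _ T' Tc) as (ss'&T''&Hs').
      exists (App a' c), ss'; repeat split; auto; [apply cc_appl; auto|lia]. }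
    assert (Hirrc : ~ typing_reducible c Jc sc).
    { intros (c'&sc'&Hs&T'&Lt). apply Hirr. destruct (R _ _ _ _ Ta T') as (ss'&T''&Hs').
      exists (App a c'), ss'; repeat split; auto; [apply cc_appr; auto|lia]. }
    destruct (IHa Ja sa HJa Ta Hirra (fun a' Hs => Hnf _ (cc_appl _ _ _ _ Hs)))
      as (Aa&IAa&HAa&Bota&RAa).
    destruct (IHc Jc sc HJc Tc Hirrc (fun c' Hs => Hnf _ (cc_appr _ _ _ _ Hs)))
      as (Ac&IAc&HAc&_&RAc).
    exists (BApp Aa Ac); repeat split; try discriminate; [|constructor; auto|].
    + apply is_A_app with a c; auto.
      * intros ->. destruct Ja as [|j Ja]; [congruence|].
        pose proof (Bota eq_refl) as Fnil.
        inversion Fa as [|? ? (P&Q&E1) _]; inversion Fnil as [|? ? E2 _]; congruence.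
      * intros b -> Hv. apply Hirr, typing_reducible_beta_redex; auto.
    + intros N' H. apply below_struct_app_inv in H as (a'&c'&->&Ha&Hc).
      destruct (proj1 (typable_family_typed_family _ _) (RAa _ Ha)) as [sa' Ta'].
      destruct (proj1 (typable_family_typed_family _ _) (RAc _ Hc)) as [sc' Tc'].
      destruct (R _ _ _ _ Ta' Tc') as (ss'&T'&_). apply typable_family_typed_family; eauto.
Qed.

Lemma typed_family_step_sigma M M' J ss :
  step_sigma M M' -> typed_family M J ss -> typed_family M' J ss.
Proof.
  intros Hs. apply Forall2_impl. intros j s.
  apply (typing_invariant_ctx_closure _ typing_invariant_sigma_rule _ _ Hs).
Qed.

(* Reduce typed beta-redexes (the total size decreases) and sigma-redexes
   (the sigma measure decreases, sizes are unchanged) until neither applies,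
   then read the approximant off. *)
Lemma reduct_approximant M J ss : J <> [] -> typed_family M J ss ->
  exists M' A, red_v M M' /\ is_A A /\ below_struct A (embed M') /\
    forall N, below_struct A (embed N) -> typable_family N J.
Proof.
  remember (list_sum ss) as n eqn:En; revert M ss En.
  induction n as [n IHn] using lt_wf_ind; intros M.
  remember (sigma_measure M) as m eqn:Em; revert M Em.
  induction m as [m IHm] using lt_wf_ind; intros M -> ss -> HJ T.
  destruct (classic (typing_reducible M J ss)) as [(M1&ss1&Hs&T1&Lt)|Hirr].
  - destruct (IHn _ Lt M1 ss1 eq_refl HJ T1) as (M'&A&Hr&HA).
    exists M', A; split; auto.
    eapply rt_trans; [apply rt_step, step_beta_v_step_v, Hs|exact Hr].
  - destruct (classic (sigma_normal M)) as [Hnf|Hnnf].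
    + destruct (readout_approximant M J ss HJ T Hirr Hnf) as (A&IA&HA&_&RA).
      exists M, A; repeat split; auto. apply rt_refl.
    + apply not_all_not_ex in Hnnf as [M1 Hs].
      destruct (IHm _ (sigma_measure_step_sigma _ _ Hs) M1 eq_refl ss eq_refl HJ
                  (typed_family_step_sigma _ _ _ _ Hs T)) as (M'&A&Hr&HA).
      exists M', A; split; auto.
      eapply rt_trans; [apply rt_step, step_sigma_step_v, Hs|exact Hr].
Qed.

Lemma BT_eq_typable_family M N J : BT_eq M N -> typable_family M J -> typable_family N J.
Proof.
  intros HMN HM. destruct (classic (J = [])) as [->|HJ]; [constructor|].
  apply typable_family_typed_family in HM as [ss T].
  destruct (reduct_approximant _ _ _ HJ T) as (M'&A&Hr&IA&HA&RA).
  assert (HAM : approximants M A)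
    by (split; auto; exists M'; split; auto; apply below_below_struct; auto).
  apply HMN in HAM as (_&N'&HN'&HAN').
  apply below_below_struct, RA in HAN'.
  eapply Forall_impl; [|exact HAN']. intros j. apply typing_expansive_red_v, HN'.
Qed.

Lemma BT_eq_converges M N C : BT_eq M N -> converges (plug C M) -> converges (plug C N).
Proof.
  intros HMN HC.
  destruct (typable_plug_inv _ _ _ _ (converges_typable _ HC)) as (J&HJ&Hplug).
  eapply typable_closed_converges, Hplug, BT_eq_typable_family; eauto.
Qed.

Theorem theorem4p16 (M N : term) : BT_eq M N -> obs_equiv M N.
Proof.
  intros HMN C _ _. split; apply BT_eq_converges; auto.
  intro A. symmetry. apply HMN.
Qed.
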